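(* Let $(T,\sigma,w)$ be an alternatingly weighted tree with vertices $v_1,\dots,v_g$ (in an arbitrary order). Then the matrix $\mathrm{Mat}(T)$ is effective, i.e. all nonzero terms $\mathrm{sgn}(\tau)\,m_{1\tau(1)}\cdots m_{g\tau(g)}$ ($\tau\in S_g$) in the expansion $\det(\mathrm{Mat}(T))=\sum_{\tau\in S_g}\mathrm{sgn}(\tau)m_{1\tau(1)}\cdots m_{g\tau(g)}$ have the same sign.
   Context: An alternatingly weighted tree $(T,\sigma,w)$ consists of: a finite graph $T$ that is a disjoint union of trees, with vertex set $V(T)$; a map $\sigma:V(T)\to\{\pm1\}$ such that $\sigma(v_1)=-\sigma(v_2)$ whenever $v_1,v_2$ are joined by an edge; and a map $w:V(T)\to\{0,1,\infty\}$. For each vertex $v_i$ write $w(v_i)=a(i)/b(i)$ with $(a(i),b(i))=(1,1)$ if $w(v_i)=1$, $(0,1)$ if $w(v_i)=0$, and $(1,0)$ if $w(v_i)=\infty$. The $g\times g$ matrix $\mathrm{Mat}(T)=(m_{ij})$ has diagonal entries $m_{ii}=\sigma(v_i)a(i)$; for each edge joining $v_i$ and $v_j$ with $i<j$, $m_{ij}=b(i)$ and $m_{ji}=b(j)$; all other entries are $0$. A square matrix is called effective if all nonzero terms of its determinant expansion have constant sign (all positive or all negative). *)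

From mathcomp Require Import all_boot all_order all_algebra all_fingroup.
Set Implicit Arguments. Unset Strict Implicit. Unset Printing Implicit Defensive.
Import Order.TTheory GRing.Theory Num.Theory.
Local Open Scope ring_scope.

Inductive weight := W0 | W1 | Winf.

(* w = a/b with (a,b) = (0,1), (1,1), (1,0). *)
Definition wnum (x : weight) : int :=
  match x with W0 => 0 | W1 => 1 | Winf => 1 end.
Definition wden (x : weight) : int :=
  match x with W0 => 1 | W1 => 1 | Winf => 0 end.

(* A simple graph on 'I_g given by a symmetric irreflexive relation is a
   forest (disjoint union of trees) iff it has no cycle, i.e. no
   duplicate-free closed walk of length >= 3. *)
Definition is_forest (g : nat) (e : rel 'I_g) : Prop :=
  symmetric e /\ irreflexive e /\
  forall c : seq 'I_g, uniq c -> (2 < size c)%N -> ~~ path.cycle e c.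

(* Alternatingly weighted tree on vertex set 'I_g (v_(i+1) <-> i). *)
Definition alt_weighted_tree (g : nat) (e : rel 'I_g)
    (sigma : 'I_g -> int) : Prop :=
  is_forest e /\
  (forall i, sigma i = 1 \/ sigma i = -1) /\
  (forall i j, e i j -> sigma i = - sigma j).

(* Mat(T): diagonal sigma(v_i) a(i); for an edge {v_i,v_j}, i<j,
   m_ij = b(i), m_ji = b(j), i.e. the (i,j) entry is b(i) whenever i,j adjacent;
   other entries 0. *)
Definition MatT (g : nat) (e : rel 'I_g) (sigma : 'I_g -> int)
    (w : 'I_g -> weight) : 'M[int]_g :=
  \matrix_(i, j)
    if i == j then sigma i * wnum (w i)
    else if e i j then wden (w i) else 0.

Definition det_term (n : nat) (A : 'M[int]_n) (tau : 'S_n) : int :=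
  (-1) ^+ tau * \prod_(i < n) A i (tau i).

(* Effective: all nonzero terms of the determinant expansion have the same
   sign (equivalently: no two terms have strictly opposite signs). *)
Definition effective (n : nat) (A : 'M[int]_n) : Prop :=
  forall tau tau' : 'S_n, 0 <= det_term A tau * det_term A tau'.

From mathcomp Require Import all_boot all_order all_algebra all_fingroup.
Set Implicit Arguments. Unset Strict Implicit. Unset Printing Implicit Defensive.
Import Order.TTheory GRing.Theory Num.Theory.
Local Open Scope ring_scope.

(* A permutation tau with a nonzero term moves every vertex to a neighbour, so
   on a forest it has no cycle of length >= 3: tau is a product of disjoint
   transpositions along edges.  Since sigma alternates along edges, the factor
   sigma_i sigma_(tau i) = -1 of each transposition cancels its sign; at fixed
   points sigma_i m_ii = sigma_i^2 a(i) >= 0, and the off-diagonal entries b(i)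
   are >= 0.  Hence (prod_i sigma_i) * term(tau) >= 0 for every tau, and since
   prod_i sigma_i = +-1, all nonzero terms have the same sign. *)

Lemma forest_perm_involutive (g : nat) (e : rel 'I_g) (t : 'S_g) :
  is_forest e -> (forall i, t i != i -> e i (t i)) -> involutive t.
Proof.
move=> [_ [_ no_cycle]] t_edge i; apply/eqP/negP => /negP t2i.
have t_inj : injective t := @perm_inj _ t.
have ti : t i != i by apply: contraNneq t2i => tiE; rewrite !tiE.
have orbit_moved : all (fun x => t x != x) (fingraph.orbit t i).
  apply/allP => x; rewrite -fconnect_orbit (fconnect_sym t_inj) => /iter_findex.
  by move=> xi; apply: contraNneq ti => tx; rewrite -xi iter_fix // tx.
have orbit_cycle : path.cycle e (fingraph.orbit t i).
  apply: sub_in_cycle orbit_moved (cycle_orbit t_inj i).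
  by move=> x y x_moved _ /eqP <-; apply: t_edge.
have orbit_long : (2 < size (fingraph.orbit t i))%N.
  rewrite size_orbit; have := iter_order t_inj i.
  case: (fingraph.order t i) (fingraph.order_gt0 t i) => [|[|[|n]]] //= _ it.
    by move: ti; rewrite it eqxx.
  by move: t2i; rewrite it eqxx.
by move: (no_cycle _ (orbit_uniq t i) orbit_long); rewrite orbit_cycle.
Qed.

Section SplitTransposition.
Variables (n : nat) (t : 'S_n) (i : 'I_n).
Hypothesis t_inv : involutive t.

Let t' := (t * tperm i (t i))%g.

Lemma mul_tperm_fixed1 : t' i = i.
Proof. by rewrite permM tpermR. Qed.

Lemma mul_tperm_fixed2 : t' (t i) = t i.
Proof. by rewrite permM t_inv tpermL. Qed.

Lemma mul_tperm_out x : x != i -> x != t i -> t' x = t x.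
Proof.
move=> xi xti; rewrite permM tpermD //.
  by apply: contraNneq xti => itx; rewrite itx t_inv.
by apply: contraNneq xi => titx; rewrite -[x]t_inv -titx t_inv.
Qed.

Lemma moved_mul_tperm x :
  (t' x != x) = [&& t x != x, x != i & x != t i].
Proof.
have [->|xi] := eqVneq x i; first by rewrite mul_tperm_fixed1 eqxx andbF.
have [->|xti] := eqVneq x (t i); first by rewrite mul_tperm_fixed2 eqxx !andbF.
by rewrite mul_tperm_out //= andbT.
Qed.

Lemma involutive_mul_tperm : involutive t'.
Proof.
move=> x; have [->|xi] := eqVneq x i; first by rewrite !mul_tperm_fixed1.
have [->|xti] := eqVneq x (t i); first by rewrite !mul_tperm_fixed2.
rewrite (mul_tperm_out xi xti) mul_tperm_out ?t_inv //.
  by apply: contraNneq xti => <-; rewrite t_inv.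
by apply: contraNneq xi => /perm_inj ->.
Qed.

End SplitTransposition.

(* Induction on the number of moved points, splitting off one transposition. *)
Lemma prod_moved_alternating (R : comRingType) (n : nat) (s : 'I_n -> R)
    (t : 'S_n) :
  (forall i, s i ^+ 2 = 1) -> involutive t ->
  (forall i, t i != i -> s (t i) = - s i) ->
  \prod_(i | t i != i) s i = (-1) ^+ t.
Proof.
move=> s_sq; move: {2}_.+1 (ltnSn #|[pred i | t i != i]|) => k.
elim: k t => // k IH t moved_lt t_inv s_alt.
have [i /= ti|fixed] := pickP [pred i | t i != i]; last first.
  have -> : t = 1%g by apply/permP => x; rewrite perm1; apply/eqP/negbFE/fixed.
  by rewrite odd_perm1 big_pred0 // => x; rewrite perm1 eqxx.
pose t' := (t * tperm i (t i))%g.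
have moved' := moved_mul_tperm i t_inv.
have t'_inv : involutive t' := involutive_mul_tperm i t_inv.
have s_alt' x : t' x != x -> s (t' x) = - s x.
  by rewrite moved' => /and3P [tx xi xti]; rewrite mul_tperm_out // s_alt.
have moved_lt' : (#|[pred x | t' x != x]| < k)%N.
  apply: leq_trans (ltnSE moved_lt); apply/proper_card/properP; split.
    by apply/subsetP => x; rewrite !inE moved' => /andP [].
  by exists i; rewrite !inE ?moved' ?eqxx ?andbF.
rewrite (bigD1 i) // (bigD1 (t i)) /=; last by rewrite t_inv eq_sym ti.
rewrite (eq_bigl (fun x => t' x != x)); last by move=> x; rewrite moved' andbA.
rewrite IH // s_alt // mulrA mulrN -expr2 s_sq mulN1r.
by rewrite odd_permM odd_tperm eq_sym ti signr_addb mulrN1 opprK.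
Qed.

Lemma det_term_scaled_ge0 (n : nat) (A : 'M[int]_n) (s : 'I_n -> int)
    (t : 'S_n) :
  \prod_(i | t i != i) s i = (-1) ^+ t ->
  (forall i, t i != i -> 0 <= A i (t i)) ->
  (forall i, t i == i -> 0 <= s i * A i i) ->
  0 <= (\prod_i s i) * det_term A t.
Proof.
move=> s_moved A_moved A_fixed.
rewrite /det_term (bigID (fun i => t i != i)) /= s_moved mulrCA !mulrA.
rewrite -expr2 sqrr_sign mul1r.
rewrite (bigID (fun i => t i != i) _ (fun i => A i _)) /= mulrCA -big_split /=; apply: mulr_ge0; apply: prodr_ge0 => i.
  exact: A_moved.
by move=> /negbNE fixed; rewrite (eqP fixed); apply: A_fixed.
Qed.

Lemma ge0_mul_of_scaled_ge0 (R : numDomainType) (c x y : R) :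
  c ^+ 2 = 1 -> 0 <= c * x -> 0 <= c * y -> 0 <= x * y.
Proof.
by move=> c_sq cx cy; rewrite -[x * y]mul1r -c_sq expr2 mulrACA mulr_ge0.
Qed.

Section MatTEntries.
Variables (g : nat) (e : rel 'I_g) (sigma : 'I_g -> int) (w : 'I_g -> weight).

Lemma MatT_offdiag_ge0 i j : i != j -> 0 <= MatT e sigma w i j.
Proof. by move=> /negbTE ij; rewrite mxE ij; case: (e i j); case: (w i). Qed.

Lemma MatT_neq0_edge i j : i != j -> MatT e sigma w i j != 0 -> e i j.
Proof. by move=> /negbTE ij; rewrite mxE ij; case: (e i j); rewrite ?eqxx. Qed.

Lemma MatT_diag_scaled_ge0 i :
  sigma i ^+ 2 = 1 -> 0 <= sigma i * MatT e sigma w i i.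
Proof. by move=> sq; rewrite mxE eqxx mulrA -expr2 sq mul1r; case: (w i). Qed.

Lemma alt_weighted_tree_sqr i : alt_weighted_tree e sigma -> sigma i ^+ 2 = 1.
Proof.
by move=> [_ [sigma_unit _]]; case: (sigma_unit i) => ->; rewrite ?sqrrN expr1n.
Qed.

Lemma MatT_det_term_scaled_ge0 (t : 'S_g) :
  alt_weighted_tree e sigma ->
  0 <= (\prod_i sigma i) * det_term (MatT e sigma w) t.
Proof.
move=> tree; have [forest [_ sigma_alt]] := tree.
have [zero|/prodf_neq0 nonzero] := eqVneq (\prod_i MatT e sigma w i (t i)) 0.
  by rewrite /det_term zero !mulr0.
have t_edge i : t i != i -> e i (t i).
  by move=> ti; apply: MatT_neq0_edge; rewrite ?nonzero // eq_sym.
apply: det_term_scaled_ge0.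
- apply: prod_moved_alternating.
  + by move=> i; apply: alt_weighted_tree_sqr tree.
  + exact: forest_perm_involutive t_edge.
  + by move=> i /t_edge /sigma_alt ->; rewrite opprK.
- by move=> i ti; apply: MatT_offdiag_ge0; rewrite eq_sym.
- by move=> i _; apply/MatT_diag_scaled_ge0/(alt_weighted_tree_sqr i tree).
Qed.

End MatTEntries.

Theorem proposition5p1 (g : nat) (e : rel 'I_g) (sigma : 'I_g -> int)
    (w : 'I_g -> weight) :
  alt_weighted_tree e sigma -> effective (MatT e sigma w).
Proof.
move=> tree t t'; apply: (@ge0_mul_of_scaled_ge0 _ (\prod_i sigma i)).
- by rewrite -prodrXl; apply: big1 => i _; apply: alt_weighted_tree_sqr tree.
- exact: MatT_det_term_scaled_ge0.
- exact: MatT_det_term_scaled_ge0.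
Qed.
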